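(* Let $R$ be a Noetherian ring and $J_1,J_2\subseteq I$ ideals. Assume that the pair of image ideals $\overline{J_2}\subseteq\overline I$ in $\overline R=R/J_1$ is Aluffi torsion-free. Suppose there is a minimal generating set $f_1,\ldots,f_s$ of $J_1$ such that (1) $J_1=(f_1,\ldots,f_s)\subseteq I$ is strongly Aluffi torsion-free, and (2) the images $\widetilde{f_1},\ldots,\widetilde{f_s}$ form a regular sequence in $\widetilde R=R/J_2$. Then the pair $J_2\subseteq I$ is Aluffi torsion-free.
   Context: A pair of ideals $J\subseteq I$ in a ring $R$ is called Aluffi torsion-free if $J\cap I^n=JI^{n-1}$ for all $n\ge1$ (with $I^0=R$). For an ideal $J=(f_1,\ldots,f_t)\subseteq I$ with given ordered generators, the pair is called strongly Aluffi torsion-free if $(f_1,\ldots,f_i)\subseteq I$ is Aluffi torsion-free for each $i=1,\ldots,t$. *)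

From HB Require Import structures.
From mathcomp Require Import all_boot all_order all_algebra.
Set Implicit Arguments. Unset Strict Implicit. Unset Printing Implicit Defensive.
Import GRing.Theory.
Local Open Scope ring_scope.

Section Ideals.
Variable R : comNzRingType.

Definition is_ideal (I : R -> Prop) : Prop :=
  I 0 /\ (forall x y, I x -> I y -> I (x + y)) /\ (forall r x, I x -> I (r * x)).

Definition ideal_sub (I J : R -> Prop) : Prop := forall x, I x -> J x.
Definition ideal_eq (I J : R -> Prop) : Prop := forall x, I x <-> J x.

Definition gen (s : seq R) : R -> Prop :=
  fun x => exists r : 'I_(size s) -> R, x = \sum_(i < size s) r i * s`_i.

Definition ideal_add (I J : R -> Prop) : R -> Prop :=
  fun x => exists a b, I a /\ J b /\ x = a + b.
Definition ideal_cap (I J : R -> Prop) : R -> Prop := fun x => I x /\ J x.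
Definition ideal_mul (I J : R -> Prop) : R -> Prop :=
  fun x => exists (n : nat) (a b : 'I_n -> R),
    (forall k, I (a k) /\ J (b k)) /\ x = \sum_(k < n) a k * b k.
(* I^0 = R *)
Definition ideal_exp (I : R -> Prop) (n : nat) : R -> Prop :=
  iter n (ideal_mul I) (fun _ => True).

Definition noetherian : Prop :=
  forall I, is_ideal I -> exists s : seq R, ideal_eq I (gen s).

Definition aluffi_tf (J I : R -> Prop) : Prop :=
  forall n : nat, (1 <= n)%N ->
    ideal_eq (ideal_cap J (ideal_exp I n)) (ideal_mul J (ideal_exp I n.-1)).

Definition strongly_aluffi_tf (fs : seq R) (I : R -> Prop) : Prop :=
  forall i : nat, (1 <= i <= size fs)%N -> aluffi_tf (gen (take i fs)) I.

(* The image pair  J/K ⊆ I/K  in R/K is Aluffi torsion-free, expressed via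
   preimages in R: the preimage in R of the ideal of R/K generated by the
   image of an ideal L of R is L + K; preimages commute with intersections;
   and (I/K)^n = (I^n + K)/K, (J/K)(I/K)^(n-1) = (J I^(n-1) + K)/K. *)
Definition aluffi_tf_mod (K J I : R -> Prop) : Prop :=
  forall n : nat, (1 <= n)%N ->
    ideal_eq (ideal_cap (ideal_add J K) (ideal_add (ideal_exp I n) K))
             (ideal_add (ideal_mul J (ideal_exp I n.-1)) K).

Definition minimal_gens (fs : seq R) (J : R -> Prop) : Prop :=
  ideal_eq J (gen fs) /\
  forall i : nat, (i < size fs)%N -> ~ ideal_eq J (gen (take i fs ++ drop i.+1 fs)).

Definition regular_seq_mod (K : R -> Prop) (fs : seq R) : Prop :=
  (forall i : nat, (i < size fs)%N -> forall x : R,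
     ideal_add K (gen (take i fs)) (fs`_i * x) -> ideal_add K (gen (take i fs)) x)
  /\ ~ ideal_add K (gen fs) 1.

End Ideals.

(* For x in J2 ∩ I^n, torsion-freeness modulo J1 gives
   x = y + e with y in J2 I^(n-1) and e in J1 ∩ I^n; as (f_1, ..., f_s) ⊆ I is
   Aluffi torsion-free, e = Σ g_k f_k with all g_k in I^(n-1).  Since e also lies
   in J2, regularity of f_s modulo J2 + (f_1, ..., f_(s-1)) puts g_s in that ideal.
   The identity
     (J2 + (f_1, ..., f_q)) ∩ I^m = J2 ∩ I^m + (f_1, ..., f_q) I^(m-1),
   proved by induction on m with the same regularity argument, splits
   g_s = j + c with j in J2 ∩ I^(n-1), so that f_s j lies in J2 I^(n-1) by
   induction on n, while f_s c is absorbed into the coefficients of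
   f_1, ..., f_(s-1).  Descending through the generators finishes the proof. *)

From HB Require Import structures.
From mathcomp Require Import all_boot all_order all_algebra.
From mathcomp Require Import ring.
Set Implicit Arguments. Unset Strict Implicit.
Import GRing.Theory.
Local Open Scope ring_scope.

Lemma downward_ind (P : nat -> Prop) p s : (p <= s)%N -> P s ->
  (forall q, (p <= q < s)%N -> P q.+1 -> P q) -> P p.
Proof.
move=> /subnKC <-; move: (s - p)%N => d; elim: d p => [|d IHd] p; first by rewrite addn0.
move=> Ps step; apply: (step); first by rewrite leqnn -addSnnS leq_addr.
apply: IHd; first by rewrite addSnnS.
by move=> q /andP[lepq ltq]; apply: step; rewrite ltnW //= -addSnnS.
Qed.

Section Ideals.
Variable R : comNzRingType.
Implicit Types (I J K : R -> Prop) (x y : R).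

Section Closure.
Variables (J : R -> Prop) (HJ : is_ideal J).

Lemma ideal0 : J 0. Proof. by case: HJ. Qed.

Lemma idealD x y : J x -> J y -> J (x + y).
Proof. by case: HJ => _ [+ _]; apply. Qed.

Lemma idealMl r x : J x -> J (r * x).
Proof. by case: HJ => _ [_]; apply. Qed.

Lemma idealMr r x : J x -> J (x * r).
Proof. by rewrite mulrC; apply: idealMl. Qed.

Lemma idealB x y : J x -> J y -> J (x - y).
Proof. by move=> Jx Jy; apply: idealD => //; rewrite -mulN1r; apply: idealMl. Qed.

Lemma ideal_sum (T : Type) (r : seq T) (P : pred T) (F : T -> R) :
  (forall i, P i -> J (F i)) -> J (\sum_(i <- r | P i) F i).
Proof. exact: (big_ind J ideal0 idealD). Qed.

End Closure.

Lemma is_ideal_full : is_ideal (fun _ : R => True).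
Proof. by []. Qed.

Lemma is_ideal_add J K : is_ideal J -> is_ideal K -> is_ideal (ideal_add J K).
Proof.
move=> HJ HK; split; [|split].
- exists 0, 0; split; [exact: ideal0 | split; [exact: ideal0 | by rewrite addr0]].
- move=> _ _ [a [b [Ja [Kb ->]]]] [a' [b' [Ja' [Kb' ->]]]].
  exists (a + a'), (b + b'); split; [|split]; [exact: idealD.. | ring].
- move=> r _ [a [b [Ja [Kb ->]]]].
  by exists (r * a), (r * b); split; [|split]; [exact: idealMl.. | rewrite mulrDr].
Qed.

Lemma mem_ideal_addl J K x : is_ideal K -> J x -> ideal_add J K x.
Proof. by move=> HK Jx; exists x, 0; rewrite addr0; split=> //; split=> //; apply: ideal0. Qed.

Lemma mem_ideal_addr J K x : is_ideal J -> K x -> ideal_add J K x.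
Proof. by move=> HJ Kx; exists 0, x; rewrite add0r; split=> //; apply: ideal0. Qed.

Lemma mem_ideal_mul J K a b : J a -> K b -> ideal_mul J K (a * b).
Proof. by move=> Ja Kb; exists 1%N, (fun=> a), (fun=> b); rewrite big_ord1. Qed.

Lemma is_ideal_mul J K : is_ideal J -> is_ideal (ideal_mul J K).
Proof.
move=> HJ; split; [|split].
- by exists 0%N, (fun=> 0), (fun=> 0); rewrite big_ord0; split=> // -[].
- move=> _ _ [n1 [a1 [b1 [H1 ->]]]] [n2 [a2 [b2 [H2 ->]]]].
  exists (n1 + n2)%N, (fun k => match split k with inl i => a1 i | inr i => a2 i end).
  exists (fun k => match split k with inl i => b1 i | inr i => b2 i end).
  split; first by move=> k; case: (split k).
  rewrite big_split_ord /=; congr (_ + _); apply: eq_bigr => i _.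
  + by rewrite (unsplitK (inl i)).
  + by rewrite (unsplitK (inr i)).
- move=> r _ [n [a [b [H ->]]]]; exists n, (fun k => r * a k), b; split.
  + by move=> k; have [Ja Kb] := H k; split=> //; apply: idealMl.
  + by rewrite mulr_sumr; apply: eq_bigr => i _; rewrite mulrA.
Qed.

Lemma is_ideal_exp I n : is_ideal I -> is_ideal (ideal_exp I n).
Proof. by case: n => [|n] HI; [apply: is_ideal_full | apply: is_ideal_mul]. Qed.

Lemma ideal_mul_subl J K : is_ideal J -> ideal_sub (ideal_mul J K) J.
Proof.
move=> HJ _ [n [a [b [H ->]]]]; apply: (ideal_sum HJ) => k _.
by apply: idealMr => //; case: (H k).
Qed.

Lemma ideal_mul_monol J J' K :
  ideal_sub J J' -> ideal_sub (ideal_mul J K) (ideal_mul J' K).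
Proof.
move=> sJJ' x [n [a [b [H ->]]]]; exists n, a, b; split=> // k.
by case: (H k) => Ja Kb; split=> //; apply: sJJ'.
Qed.

Lemma mem_ideal_exp_mul I n x y :
  I x -> ideal_exp I n.-1 y -> ideal_exp I n (x * y).
Proof. by case: n => [|n] //=; apply: mem_ideal_mul. Qed.

Lemma ideal_mul_expSr J I k j f :
  ideal_mul J (ideal_exp I k) j -> I f -> ideal_mul J (ideal_exp I k.+1) (j * f).
Proof.
move=> [n [a [b [H ->]]]] If; exists n, a, (fun i => f * b i); split.
  by move=> i; case: (H i) => Ja Ib; split=> //; apply: mem_ideal_mul.
by rewrite mulr_suml; apply: eq_bigr => i _; rewrite -mulrA [b i * f]mulrC.
Qed.

Lemma ideal_mul_exp_sub J I n : ideal_sub J I -> (1 <= n)%N ->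
  ideal_sub (ideal_mul J (ideal_exp I n.-1)) (ideal_exp I n).
Proof. by case: n => // n sJI _; apply: ideal_mul_monol. Qed.

Lemma ideal_mul_cap_exp J I n j f :
  ((1 < n)%N -> ideal_sub (ideal_cap J (ideal_exp I n.-1)) (ideal_mul J (ideal_exp I n.-2))) ->
  J j -> ideal_exp I n.-1 j -> I f -> ideal_mul J (ideal_exp I n.-1) (j * f).
Proof.
case: n => [|[|n]] tf_prev Jj Ij If; try exact: mem_ideal_mul.
exact: ideal_mul_expSr (tf_prev isT j (conj Jj Ij)) If.
Qed.

Lemma aluffi_tf_of_cap_sub J I : is_ideal J -> ideal_sub J I ->
  (forall n, (1 <= n)%N ->
     ideal_sub (ideal_cap J (ideal_exp I n)) (ideal_mul J (ideal_exp I n.-1))) ->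
  aluffi_tf J I.
Proof.
move=> HJ sJI tf n n_gt0 x; split; first exact: tf.
by move=> Jx; split; [apply: ideal_mul_subl Jx | apply: ideal_mul_exp_sub Jx].
Qed.

End Ideals.

Section LinearCombinations.
Variable R : comNzRingType.
Implicit Types (C D I : R -> Prop) (s fs : seq R) (x : R).

(* For an ideal [C], [lincomb C fs p] is the ideal [(fs_0, ..., fs_(p-1)) C],
   with coefficients indexed by [nat] so that [p] can vary. *)
Definition lincomb C fs p x : Prop :=
  exists g : nat -> R, (forall k, C (g k)) /\ x = \sum_(0 <= k < p) g k * fs`_k.

Lemma is_ideal_lincomb C fs p : is_ideal C -> is_ideal (lincomb C fs p).
Proof.
move=> HC; split; [|split].
- exists (fun=> 0); split=> [_|]; first exact: ideal0.
  by rewrite big1 // => k _; rewrite mul0r.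
- move=> _ _ [g [Cg ->]] [h [Ch ->]]; exists (fun k => g k + h k); split.
    by move=> k; apply: idealD.
  by rewrite -big_split; apply: eq_bigr => k _; rewrite mulrDl.
- move=> r _ [g [Cg ->]]; exists (fun k => r * g k); split.
    by move=> k; apply: idealMl.
  by rewrite mulr_sumr; apply: eq_bigr => k _; rewrite mulrA.
Qed.

Lemma lincomb_widen C fs p q x :
  C 0 -> (p <= q)%N -> lincomb C fs p x -> lincomb C fs q x.
Proof.
move=> C0 le_pq [g [Cg ->]]; exists (fun k => if (k < p)%N then g k else 0).
split; first by move=> k; case: ifP.
rewrite (big_nat_widen _ _ _ _ _ le_pq) big_mkcond /=.
by apply: eq_bigr => k _; case: ifP; rewrite ?mul0r.
Qed.

Lemma lincombS C fs p x :
  lincomb C fs p.+1 x -> exists2 g, C g & lincomb C fs p (x - g * fs`_p).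
Proof.
move=> [g [Cg ->]]; exists (g p) => //; exists g; split=> //.
by rewrite big_nat_recr //= addrK.
Qed.

Lemma lincomb_mull C D fs p f x : (forall c, C c -> D (f * c)) ->
  lincomb C fs p x -> lincomb D fs p (f * x).
Proof.
move=> CD [g [Cg ->]]; exists (fun k => f * g k); split=> [k|]; first exact: CD.
by rewrite mulr_sumr; apply: eq_bigr => k _; rewrite mulrA.
Qed.

Lemma gen_lincomb s x : gen s x <-> lincomb (fun _ => True) s (size s) x.
Proof.
split=> [[r ->] | [g [_ ->]]].
  exists (fun k => if insub k is Some i then r i else 0); split=> //.
  by rewrite big_mkord; apply: eq_bigr => i _; rewrite valK.
by exists (fun i => g i); rewrite big_mkord.
Qed.

Lemma gen_take_lincomb fs p x : (p <= size fs)%N ->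
  gen (take p fs) x <-> lincomb (fun _ => True) fs p x.
Proof.
move=> le_p; rewrite gen_lincomb size_takel //.
have eq_sum g : \sum_(0 <= k < p) g k * (take p fs)`_k = \sum_(0 <= k < p) g k * fs`_k.
  by apply: eq_big_nat => k /andP[_ lt_kp]; rewrite nth_take.
by split=> -[g [_ ->]]; exists g; rewrite eq_sum.
Qed.

Lemma lincomb_gen_take C fs p x :
  (p <= size fs)%N -> lincomb C fs p x -> gen (take p fs) x.
Proof. by move=> le_p [g [_ ->]]; apply/gen_take_lincomb => //; exists g. Qed.

Lemma gen_take_widen fs p q x :
  (p <= q <= size fs)%N -> gen (take p fs) x -> gen (take q fs) x.
Proof.
move=> /andP[le_pq le_q]; rewrite !gen_take_lincomb ?(leq_trans le_pq) //.
exact: lincomb_widen.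
Qed.

Lemma lincomb_exp_sub I fs p n x : is_ideal I -> (forall k, (k < p)%N -> I fs`_k) ->
  lincomb (ideal_exp I n.-1) fs p x -> ideal_exp I n x.
Proof.
move=> HI Ifs [g [Ig ->]]; rewrite big_seq; apply: (ideal_sum (is_ideal_exp n HI)).
move=> k; rewrite mem_index_iota => /andP[_ lt_kp]; rewrite mulrC.
exact: mem_ideal_exp_mul (Ifs k lt_kp) (Ig k).
Qed.

Lemma ideal_mul_gen_lincomb D s x :
  is_ideal D -> ideal_mul (gen s) D x -> lincomb D s (size s) x.
Proof.
move=> HD [n [a [b [H ->]]]]; apply: (ideal_sum (is_ideal_lincomb _ _ HD)) => k _.
have [/gen_lincomb Ga Db] := H k; rewrite mulrC.
by apply: lincomb_mull Ga => c _; apply: idealMr.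
Qed.

Lemma is_ideal_gen s : is_ideal (gen s).
Proof.
have [L0 [LD LM]] := is_ideal_lincomb s (size s) (@is_ideal_full R).
split; [|split] => [|x y|r x]; rewrite ?gen_lincomb //; [exact: LD | exact: LM].
Qed.

Lemma strongly_aluffi_tf_lincomb I fs n e : is_ideal I -> strongly_aluffi_tf fs I ->
  (1 <= n)%N -> gen fs e -> ideal_exp I n e -> lincomb (ideal_exp I n.-1) fs (size fs) e.
Proof.
move=> HI Hs n_gt0 Ge Ie; have [s0 | s_gt0] := posnP (size fs).
  move/gen_lincomb: Ge => [g [_ ->]]; rewrite s0 big_geq //.
  exact: ideal0 (is_ideal_lincomb _ _ (is_ideal_exp _ HI)).
have := Hs (size fs); rewrite take_size s_gt0 leqnn => /(_ isT n n_gt0 e) [+ _].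
move=> /(_ (conj Ge Ie)); exact: ideal_mul_gen_lincomb (is_ideal_exp _ HI).
Qed.

End LinearCombinations.

Section AluffiTorsionFree.
Variables (R : comNzRingType) (J1 J2 I : R -> Prop) (fs : seq R).
Hypotheses (HJ1 : is_ideal J1) (HJ2 : is_ideal J2) (HI : is_ideal I).
Hypotheses (sJ1I : ideal_sub J1 I) (sJ2I : ideal_sub J2 I) (J1_gen : ideal_eq J1 (gen fs)).
Hypothesis tf_mod : aluffi_tf_mod J1 J2 I.
Hypothesis strong_tf : strongly_aluffi_tf fs I.
Hypothesis regular : regular_seq_mod J2 fs.

Lemma nth_in_I k : (k < size fs)%N -> I fs`_k.
Proof.
move=> lt_ks; apply/sJ1I/J1_gen/gen_lincomb; exists (fun l => (l == k)%:R); split=> //.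
rewrite (bigD1_seq k) /= ?mem_index_iota ?iota_uniq // eqxx mul1r big1 ?addr0 //.
by move=> l /negbTE ->; rewrite mul0r.
Qed.

Lemma aluffi_tf_mod_lincomb n x : (1 <= n)%N -> ideal_exp I n x -> ideal_add J2 J1 x ->
  exists2 y, ideal_mul J2 (ideal_exp I n.-1) y &
             lincomb (ideal_exp I n.-1) fs (size fs) (x - y).
Proof.
move=> n_gt0 Ix J21x.
have [y [e [Jy [J1e def_x]]]] : ideal_add (ideal_mul J2 (ideal_exp I n.-1)) J1 x.
  by apply: (tf_mod n_gt0 x).1; split=> //; apply: mem_ideal_addl.
have def_e : e = x - y by rewrite def_x addrC addKr.
exists y => //; rewrite -def_e.
apply: strongly_aluffi_tf_lincomb => //; first exact/J1_gen.
rewrite def_e; apply: (idealB (is_ideal_exp n HI)) => //.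
exact: ideal_mul_exp_sub sJ2I n_gt0 _ Jy.
Qed.

(* By regularity of [f_q] modulo [J2 + (f_0, ..., f_(q-1))], the coefficient of
   [f_q] lies in that ideal; the hypothesis splits it into a [J2]-part [j] and a
   part absorbed by the earlier generators. *)
Lemma peel_last_gen m q y : (q < size fs)%N ->
  ideal_sub (ideal_cap (ideal_exp I m) (ideal_add J2 (gen (take q fs))))
            (ideal_add (ideal_cap J2 (ideal_exp I m)) (lincomb (ideal_exp I m.-1) fs q)) ->
  lincomb (ideal_exp I m) fs q.+1 y -> ideal_add J2 (gen (take q fs)) y ->
  exists2 j, ideal_cap J2 (ideal_exp I m) j &
             lincomb (ideal_exp I m) fs q (y - fs`_q * j).
Proof.
move=> lt_qs split_m /lincombS[g Ig Ly] Jy.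
have HJq : is_ideal (ideal_add J2 (gen (take q fs))) := is_ideal_add HJ2 (is_ideal_gen _).
have Jfg : ideal_add J2 (gen (take q fs)) (fs`_q * g).
  have -> : fs`_q * g = y - (y - g * fs`_q) by ring.
  apply: (idealB HJq) Jy _; apply: mem_ideal_addr HJ2 _.
  exact: lincomb_gen_take (ltnW lt_qs) Ly.
have [j [c [[J2j Ij] [Lc def_g]]]] := split_m g (conj Ig (regular.1 q lt_qs g Jfg)).
exists j => //.
have -> : y - fs`_q * j = (y - g * fs`_q) + fs`_q * c by rewrite def_g; ring.
apply: (idealD (is_ideal_lincomb _ _ (is_ideal_exp m HI))) Ly _.
by apply: lincomb_mull Lc => c' Ic'; apply: mem_ideal_exp_mul (nth_in_I lt_qs) Ic'.
Qed.

Lemma cap_exp_add_gen m q : (q <= size fs)%N ->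
  ideal_sub (ideal_cap (ideal_exp I m) (ideal_add J2 (gen (take q fs))))
            (ideal_add (ideal_cap J2 (ideal_exp I m)) (lincomb (ideal_exp I m.-1) fs q)).
Proof.
elim: m q => [|m IHm] q le_qs x [Ix [a [b [J2a [Gb def_x]]]]].
  by exists a, b; split=> //; split=> //; apply/gen_take_lincomb.
have J21x : ideal_add J2 J1 x.
  exists a, b; split=> //; split=> //; apply/J1_gen; rewrite -(take_size fs).
  by apply: gen_take_widen Gb; rewrite le_qs leqnn.
pose P r := exists2 j, J2 j & lincomb (ideal_exp I m) fs r (x - j).
have [j J2j Lj] : P q.
  apply: (downward_ind le_qs).
    have [y Jy Ly] := aluffi_tf_mod_lincomb (ltn0Sn m) Ix J21x.
    by exists y => //; apply: ideal_mul_subl Jy.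
  move=> r /andP[le_qr lt_rs] [j J2j Lj].
  have Jr : ideal_add J2 (gen (take r fs)) (x - j).
    exists (a - j), b; split; first exact: idealB.
    by split; [apply: gen_take_widen Gb; rewrite le_qr ltnW | rewrite def_x; ring].
  have [j' [J2j' _] Lj'] := peel_last_gen lt_rs (IHm r (ltnW lt_rs)) Lj Jr.
  exists (j + fs`_r * j'); first by apply: idealD => //; apply: idealMl.
  by rewrite opprD addrA.
exists j, (x - j); split; last by split=> //; rewrite addrC subrK.
split=> //; rewrite -[j](subKr x); apply: (idealB (is_ideal_exp _ HI)) Ix _.
exact: (lincomb_exp_sub (n := m.+1)) HI (fun k lt_kq => nth_in_I (leq_trans lt_kq le_qs)) Lj.
Qed.

Lemma cap_lincomb_sub_mul n i z : (i <= size fs)%N ->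
  ((1 < n)%N -> ideal_sub (ideal_cap J2 (ideal_exp I n.-1)) (ideal_mul J2 (ideal_exp I n.-2))) ->
  J2 z -> lincomb (ideal_exp I n.-1) fs i z -> ideal_mul J2 (ideal_exp I n.-1) z.
Proof.
move=> + tf_prev; elim: i z => [|i IHi] z le_is J2z Lz.
  by case: Lz => g [_ ->]; rewrite big_geq //; apply: ideal0 (is_ideal_mul _ HJ2).
have Jz : ideal_add J2 (gen (take i fs)) z by apply: mem_ideal_addl (is_ideal_gen _) J2z.
have [j [J2j Ij] Lj] := peel_last_gen le_is (cap_exp_add_gen (m := n.-1) (ltnW le_is)) Lz Jz.
rewrite -(subrK (fs`_i * j) z); apply: (idealD (is_ideal_mul _ HJ2)).
  by apply: IHi (ltnW le_is) _ Lj; apply: idealB => //; apply: idealMl.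
by rewrite mulrC; apply: ideal_mul_cap_exp tf_prev J2j Ij (nth_in_I le_is).
Qed.

Lemma cap_exp_sub_mul n : (1 <= n)%N ->
  ideal_sub (ideal_cap J2 (ideal_exp I n)) (ideal_mul J2 (ideal_exp I n.-1)).
Proof.
elim/ltn_ind: n => n IHn n_gt0 x [J2x Ix].
have [y Jy Le] := aluffi_tf_mod_lincomb n_gt0 Ix (mem_ideal_addl HJ1 J2x).
rewrite -(subrK y x); apply: (idealD (is_ideal_mul _ HJ2)) _ (Jy).
apply: cap_lincomb_sub_mul (leqnn _) _ _ Le.
- by move=> lt1n; apply: IHn; rewrite ?ltn_predL ?ltn_predRL.
- by apply: idealB => //; apply: ideal_mul_subl Jy.
Qed.

End AluffiTorsionFree.

Unset Implicit Arguments. Set Strict Implicit.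

Theorem theorem2p15 (R : comNzRingType) (J1 J2 I : R -> Prop) (fs : seq R) :
  noetherian R ->
  is_ideal J1 -> is_ideal J2 -> is_ideal I ->
  ideal_sub J1 I -> ideal_sub J2 I ->
  aluffi_tf_mod J1 J2 I ->
  minimal_gens fs J1 ->
  strongly_aluffi_tf fs I ->
  regular_seq_mod J2 fs ->
  aluffi_tf J2 I.
Proof.
move=> _ HJ1 HJ2 HI sJ1I sJ2I tf_mod [J1_gen _] strong_tf regular.
apply: aluffi_tf_of_cap_sub => // n.
exact: (cap_exp_sub_mul HJ1 HJ2 HI sJ1I sJ2I J1_gen tf_mod strong_tf regular).
Qed.
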